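(* Assume $a_1,\dots,a_N,c_1,c_2>0$ with $a_ia_j<1$, $a_ic_1<1$, $a_ic_2<1$ for all $i,j$, and additionally $c_1c_2<1$. For any down-right path $\mathcal P$ in the strip and any fixed $\lambda_1^{(0)}\in\mathbb Z$, the quantity $$Z_{\mathrm{Geo}}=\sum_{\lambda_i^{(j)}\in\mathbb Z,\,(i,j)\neq(1,0)}\mathrm{wt}^{\mathcal{GP}}(\boldsymbol\lambda)$$ (sum over $i\in\{1,2\}$, $0\le j\le N$, $(i,j)\ne(1,0)$) is finite and does not depend on the choice of $\mathcal P$ nor of $\lambda_1^{(0)}$.
   Context: Fix $N\ge1$; extend $a_{j+kN}=a_j$. The strip is $\{(n,m)\in\mathbb Z^2:0\le m\le n\le m+N\}$. A down-right path is a sequence of vertices $\mathbf p_0,\dots,\mathbf p_N$ of the strip with $\mathbf p_0=(m_0,m_0)$ and each step $\mathbf p_j-\mathbf p_{j-1}\in\{(1,0),(0,-1)\}$ (so $\mathbf p_N$ is of the form $(m+N,m)$). Its edge $\mathsf e_j$ from $\mathbf p_{j-1}$ to $\mathbf p_j$ carries the label $\ell_j$: a horizontal edge $(n-1,m)\to(n,m)$ is labelled $a_n$, a vertical edge between $(n,m-1)$ and $(n,m)$ is labelled $a_m$. For $1\le j\le N$ set $(\mathrm{up}(j),\mathrm{low}(j))=(j,j-1)$ if $\mathsf e_j$ is horizontal and $(j-1,j)$ if $\mathsf e_j$ is vertical. For $\boldsymbol\lambda=(\lambda_i^{(j)})_{i\in\{1,2\},0\le j\le N}\in\mathbb Z^{2N+2}$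 define the two-layer Gibbs weight $$\mathrm{wt}^{\mathcal{GP}}(\boldsymbol\lambda)=c_1^{\lambda_1^{(0)}-\lambda_2^{(0)}}c_2^{\lambda_1^{(N)}-\lambda_2^{(N)}}\prod_{j=1}^N\Big[\prod_{i=1}^2\ell_j^{\lambda_i^{(\mathrm{up}(j))}-\lambda_i^{(\mathrm{low}(j))}}\mathbf 1\{\lambda_i^{(\mathrm{up}(j))}\ge\lambda_i^{(\mathrm{low}(j))}\}\Big]\mathbf 1\{\lambda_1^{(\mathrm{low}(j))}\ge\lambda_2^{(\mathrm{up}(j))}\}.$$ *)

From HB Require Import structures.
From mathcomp Require Import all_boot all_order all_algebra.
From mathcomp Require Import all_classical all_reals all_analysis.
Set Implicit Arguments. Unset Strict Implicit. Unset Printing Implicit Defensive.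
Import Order.TTheory GRing.Theory Num.Theory.
Local Open Scope ring_scope.

Section GP.
Variables (R : realType) (N : nat).

(* periodic extension: a_n := a_{((n-1) mod N) + 1}, a indexed by 1..N *)
Definition aper (a : nat -> R) (n : int) : R := a (absz ((n - 1) %% N%:Z)%Z).+1.

Definition in_strip (v : int * int) : bool :=
  (0 <= v.2) && (v.2 <= v.1) && (v.1 <= v.2 + N%:Z).

(* p 0, ..., p N are the vertices of the path (values beyond N irrelevant) *)
Definition is_down_right_path (p : nat -> int * int) : Prop :=
  [/\ (p 0%N).1 = (p 0%N).2,
      (forall j, (j <= N)%N -> in_strip (p j)) &
      (forall j, (1 <= j <= N)%N ->
         p j = ((p j.-1).1 + 1, (p j.-1).2) \/ p j = ((p j.-1).1, (p j.-1).2 - 1))].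

Definition horiz (p : nat -> int * int) (j : nat) : bool :=
  (p j).1 == (p j.-1).1 + 1.

Definition label (a : nat -> R) (p : nat -> int * int) (j : nat) : R :=
  if horiz p j then aper a (p j).1 else aper a (p j.-1).2.

Definition up (p : nat -> int * int) (j : nat) : nat := if horiz p j then j else j.-1.
Definition low (p : nat -> int * int) (j : nat) : nat := if horiz p j then j.-1 else j.

(* lam (i, j) stands for lambda_{i+1}^{(j)} *)
Definition lamT := {ffun 'I_2 * 'I_N.+1 -> int}.
Definition L (lam : lamT) (i : 'I_2) (j : nat) : int := lam (i, inord j).

Definition wtGP (a : nat -> R) (c1 c2 : R) (p : nat -> int * int) (lam : lamT) : R :=
  c1 ^ (L lam ord0 0 - L lam 1 0) * c2 ^ (L lam ord0 N - L lam 1 N) *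
  \prod_(1 <= j < N.+1)
    ((\prod_(i < 2)
        (label a p j ^ (L lam i (up p j) - L lam i (low p j)) *
         ((L lam i (low p j) <= L lam i (up p j))%R)%:R)) *
     ((L lam 1 (up p j) <= L lam ord0 (low p j))%R)%:R).

End GP.

From HB Require Import structures.
From mathcomp Require Import all_boot all_order all_algebra.
From mathcomp Require Import all_classical all_reals all_analysis.
From mathcomp Require Import zify ring.
Import Order.TTheory GRing.Theory Num.Theory.
Local Open Scope classical_set_scope.
Local Open Scope ring_scope.
Set Implicit Arguments. Unset Strict Implicit. Unset Printing Implicit Defensive.

(* The weight of a configuration depends on the path only through the
   orientations of its edges and their labels.  Turning a horizontal-vertical
   corner of the path into a vertical-horizontal one, the first edge from
   vertical to horizontal, or the last edge from horizontal to vertical leaves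
   the partition function unchanged: each move is matched by a
   weight-preserving bijection of configurations (a piecewise-linear
   reflection of one column in the interval allowed by its neighbours, a
   translation of the columns 1..N, a reflection of the last column).  These
   moves bring every path to the horizontal one and, the labels being
   N-periodic, move the horizontal path one step along the strip;
   translating all of lambda removes the dependence on lambda_1^(0).
   On the horizontal path the weight vanishes unless the two rows interlace,
   and then it is at most rho^(lambda_1^(N) - lambda_2^(0)), where rho < 1 is
   the largest of the products c1 c2, a_i c_k, a_i a_j; this is dominated by
   the summable weight prod tau^|lambda_i^(j) - lambda_1^(0)| with
   tau^(2N+2) = rho. *)

Definition lam1 N (lam : lamT N) (k : nat) : int := L lam ord0 k.
Definition lam2 N (lam : lamT N) (k : nat) : int := L lam 1 k.

Definition up_of (h : nat -> bool) (j : nat) : nat := if h j then j else j.-1.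
Definition low_of (h : nat -> bool) (j : nat) : nat := if h j then j.-1 else j.

Section EdgeWeight.
Variable R : comUnitRingType.

Definition edge_wt (l : R) (u1 u2 l1 l2 : int) : R :=
  l ^ ((u1 + u2) - (l1 + l2)) * ((l1 <= u1) && (l2 <= u2) && (u2 <= l1))%:R.

Lemma edge_wt_shift l u1 u2 l1 l2 d :
  edge_wt l (u1 + d) (u2 + d) (l1 + d) (l2 + d) = edge_wt l u1 u2 l1 l2.
Proof. by rewrite /edge_wt; congr (_ ^ _ * (nat_of_bool _)%:R); lia. Qed.

Lemma mulr_natb (x y : R) (b1 b2 : bool) :
  (x * b1%:R) * (y * b2%:R) = (x * y) * (b1 && b2)%:R.
Proof. by case: b1; case: b2; rewrite /= ?mulr0 ?mul0r ?mulr1. Qed.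

Lemma mulr_natbA (x : R) (b1 b2 : bool) : x * b1%:R * b2%:R = x * (b1 && b2)%:R.
Proof. by case: b1; case: b2; rewrite /= ?mulr0 ?mul0r ?mulr1. Qed.

(* Within the interval allowed by its two neighbours (m1, m2) and (n1, n2),
   the middle column (k1, k2) is reflected; this exchanges the exponents of
   the two labels. *)
Lemma edge_wt_reflect (al be : R) m1 m2 n1 n2 k1 k2 :
  let k1' := Num.max m2 n2 + Num.min m1 n1 - k2 in
  let k2' := Num.max m1 n1 + Num.min m2 n2 - k1 in
  edge_wt be m1 m2 k1' k2' * edge_wt al n1 n2 k1' k2' =
  edge_wt al k1 k2 m1 m2 * edge_wt be k1 k2 n1 n2.
Proof.
rewrite /edge_wt !mulr_natb [be ^ _ * _]mulrC.
by congr (al ^ _ * be ^ _ * (nat_of_bool _)%:R); lia.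
Qed.

End EdgeWeight.

Lemma reindex_esum_inv (R : realType) (T T' : choiceType) (P : set T) (Q : set T')
    (e : T -> T') (e' : T' -> T) (f : T -> \bar R) (g : T' -> \bar R) :
  (forall x, P x -> Q (e x)) -> (forall y, Q y -> P (e' y)) ->
  cancel e e' -> cancel e' e -> (forall x, g (e x) = f x) ->
  \esum_(y in Q) g y = \esum_(x in P) f x.
Proof.
move=> PQ QP eK e'K gf.
have bij_e : set_bij P Q e.
  split; [by move=> x /PQ | exact: in2W (can_inj eK) |].
  by move=> y Qy; exists (e' y); [exact: QP | exact: e'K].
by rewrite (reindex_esum P Q e g bij_e); apply: eq_esum => x _; rewrite gf.
Qed.

Lemma prodr_nat_window (R : comPzSemiRingType) (F G : nat -> R) m n j :
  (m <= j)%N -> (j.+2 <= n)%N ->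
  (forall k, (m <= k < n)%N -> k != j -> k != j.+1 -> G k = F k) ->
  G j * G j.+1 = F j * F j.+1 ->
  \prod_(m <= k < n) G k = \prod_(m <= k < n) F k.
Proof.
move=> mj jn GF Gj.
have jn' : (j <= n)%N by lia.
have jj2 : (j <= j.+2)%N by lia.
rewrite !(@big_cat_nat _ _ _ j m n) //= !(@big_cat_nat _ _ _ j.+2 j n) //=.
rewrite !(@big_ltn _ _ _ j j.+2) // !big_nat1 -!mulrA [G j * _]mulrA [F j * _]mulrA Gj.
by congr (_ * (_ * _)); apply: eq_big_nat => k /andP[? ?]; apply: GF; lia.
Qed.

Section ShapeWeight.
Variables (R : realType) (N : nat) (c1 c2 : R).

Definition edge_at (h : nat -> bool) (l : nat -> R) (lam : lamT N) (k : nat) : R :=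
  edge_wt (l k) (lam1 lam (up_of h k)) (lam2 lam (up_of h k))
                (lam1 lam (low_of h k)) (lam2 lam (low_of h k)).

Lemma eq_edge_at h h' (l l' : nat -> R) lam k : h' k = h k -> l' k = l k ->
  edge_at h' l' lam k = edge_at h l lam k.
Proof. by move=> hk lk; rewrite /edge_at /up_of /low_of hk lk. Qed.

Definition shape_wt (h : nat -> bool) (l : nat -> R) (lam : lamT N) : R :=
  c1 ^ (lam1 lam 0 - lam2 lam 0) * c2 ^ (lam1 lam N - lam2 lam N) *
  \prod_(1 <= k < N.+1) edge_at h l lam k.

Lemma wtGP_shape_wt a p lam : (forall j, (1 <= j <= N)%N -> label N a p j != 0) ->
  wtGP a c1 c2 p lam = shape_wt (horiz p) (label N a p) lam.
Proof.
move=> label_neq0; rewrite /wtGP /shape_wt; congr (_ * _).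
apply: eq_big_nat => j /label_neq0 lj_neq0.
rewrite big_ord_recl big_ord1 (_ : lift ord0 ord0 = 1); last exact/val_inj.
rewrite mulr_natb mulr_natbA /edge_at /edge_wt -expfzDr //.
by congr (_ ^ _ * (nat_of_bool _)%:R); rewrite /lam1 /lam2 /up_of /low_of /up /low; lia.
Qed.

Lemma shape_wt_ge0 h l lam : 0 < c1 -> 0 < c2 -> (forall j, (1 <= j <= N)%N -> 0 < l j) ->
  0 <= shape_wt h l lam.
Proof.
move=> c1_gt0 c2_gt0 l_gt0.
rewrite /shape_wt !mulr_ge0 ?exprz_ge0 ?(ltW c1_gt0) ?(ltW c2_gt0) //.
rewrite big_seq; apply: prodr_ge0 => k; rewrite mem_index_iota => /l_gt0 lk_gt0.
by rewrite /edge_at /edge_wt mulr_ge0 ?exprz_ge0 ?ler0n ?(ltW lk_gt0).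
Qed.

Definition slice (l0 : int) : set (lamT N) := [set lam | lam (ord0, ord0) = l0].

Definition Zshape (h : nat -> bool) (l : nat -> R) (l0 : int) : \bar R :=
  \esum_(lam in slice l0) (shape_wt h l lam)%:E.

Lemma eq_Zshape h h' l l' l0 :
  (forall k, (1 <= k <= N)%N -> h' k = h k /\ l' k = l k) ->
  Zshape h' l' l0 = Zshape h l l0.
Proof.
move=> hl_eq; apply: eq_esum => lam _; congr (_%:E); congr (_ * _).
by apply: eq_big_nat => k /hl_eq[hk lk]; apply: eq_edge_at.
Qed.

End ShapeWeight.

Section Flips.
Variables (R : realType) (N : nat) (c1 c2 : R).
Implicit Types (h : nat -> bool) (lam : lamT N).

Definition set_col lam (k : nat) (v1 v2 : int) : lamT N :=
  [ffun ij => if val ij.2 == k then (if ij.1 == ord0 then v1 else v2) else lam ij].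

Definition shift_cols lam (k0 : nat) (d : int) : lamT N :=
  [ffun ij => if (val ij.2 < k0)%N then lam ij else lam ij + d].

Lemma lam1_set_col lam k v1 v2 j : (j <= N)%N ->
  lam1 (set_col lam k v1 v2) j = if j == k then v1 else lam1 lam j.
Proof. by move=> jN; rewrite /lam1 /L ffunE /= inordK. Qed.

Lemma lam2_set_col lam k v1 v2 j : (j <= N)%N ->
  lam2 (set_col lam k v1 v2) j = if j == k then v2 else lam2 lam j.
Proof. by move=> jN; rewrite /lam2 /L ffunE /= inordK. Qed.

Lemma lam1_shift_cols lam k0 d j : (j <= N)%N ->
  lam1 (shift_cols lam k0 d) j = if (j < k0)%N then lam1 lam j else lam1 lam j + d.
Proof. by move=> jN; rewrite /lam1 /L ffunE /= inordK. Qed.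

Lemma lam2_shift_cols lam k0 d j : (j <= N)%N ->
  lam2 (shift_cols lam k0 d) j = if (j < k0)%N then lam2 lam j else lam2 lam j + d.
Proof. by move=> jN; rewrite /lam2 /L ffunE /= inordK. Qed.

Lemma set_col_origin lam k v1 v2 :
  k != 0%N -> set_col lam k v1 v2 (ord0, ord0) = lam (ord0, ord0).
Proof. by move=> k_neq0; rewrite ffunE /= eq_sym (negbTE k_neq0). Qed.

Lemma set_col_set_col lam k v1 v2 w1 w2 :
  set_col (set_col lam k v1 v2) k w1 w2 = set_col lam k w1 w2.
Proof. by apply/ffunP => -[i q]; rewrite !ffunE /=; case: (val q == k). Qed.

Lemma set_col_idE lam k v1 v2 : (k <= N)%N ->
  v1 = lam1 lam k -> v2 = lam2 lam k -> set_col lam k v1 v2 = lam.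
Proof.
move=> kN -> ->; apply/ffunP => -[i q]; rewrite ffunE /=.
case: eqP => // qk; rewrite /lam1 /lam2 /L.
have -> : inord k = q by apply/val_inj; rewrite /= inordK -?qk.
by case: i => -[|[|]] //= ?; congr (lam (_, _)); apply/val_inj.
Qed.

Lemma shift_colsK lam k0 d d' : d + d' = 0 -> shift_cols (shift_cols lam k0 d) k0 d' = lam.
Proof.
move=> dd'; apply/ffunP => -[i q]; rewrite !ffunE /=.
by case: ifP => q_lt; rewrite q_lt // -addrA dd' addr0.
Qed.

Lemma edge_at_set_col h (l : nat -> R) lam j v1 v2 k : (k <= N)%N -> k != j -> k.-1 != j ->
  edge_at h l (set_col lam j v1 v2) k = edge_at h l lam k.
Proof.
move=> kN /negbTE kj /negbTE k1j; have k1N : (k.-1 <= N)%N by lia.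
by rewrite /edge_at /up_of /low_of; case: (h k);
  rewrite !lam1_set_col // !lam2_set_col // kj k1j.
Qed.

Lemma edge_at_shift_cols h (l : nat -> R) lam k0 d k : (k <= N)%N -> (k0 <= k.-1)%N ->
  edge_at h l (shift_cols lam k0 d) k = edge_at h l lam k.
Proof.
move=> kN k0k; have k1N : (k.-1 <= N)%N by lia.
have [k_ge k1_ge] : (k < k0)%N = false /\ (k.-1 < k0)%N = false by split; lia.
by rewrite /edge_at /up_of /low_of; case: (h k);
  rewrite !lam1_shift_cols // !lam2_shift_cols // k_ge k1_ge edge_wt_shift.
Qed.

Lemma shape_wt_shift_cols0 h (l : nat -> R) lam d :
  shape_wt c1 c2 h l (shift_cols lam 0 d) = shape_wt c1 c2 h l lam.
Proof.
rewrite /shape_wt !lam1_shift_cols // !lam2_shift_cols //=.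
congr (c1 ^ _ * c2 ^ _ * _); try lia.
by apply: eq_big_nat => k /andP[_ kN]; rewrite edge_at_shift_cols.
Qed.

Lemma Zshape_slice0 h (l : nat -> R) l0 : Zshape N c1 c2 h l l0 = Zshape N c1 c2 h l 0.
Proof.
apply: (reindex_esum_inv (e := fun lam => shift_cols lam 0 l0)
                         (e' := fun lam => shift_cols lam 0 (- l0))).
- by move=> lam; rewrite /slice /= ffunE /= => ->; rewrite add0r.
- by move=> lam; rewrite /slice /= ffunE /= => ->; rewrite subrr.
- by move=> lam; rewrite shift_colsK ?subrr.
- by move=> lam; rewrite shift_colsK ?addNr.
- by move=> lam; rewrite shape_wt_shift_cols0.
Qed.

Definition corner_flip lam (j : nat) : lamT N :=
  set_col lam j
    (Num.max (lam2 lam j.-1) (lam2 lam j.+1) + Num.min (lam1 lam j.-1) (lam1 lam j.+1)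
       - lam2 lam j)
    (Num.max (lam1 lam j.-1) (lam1 lam j.+1) + Num.min (lam2 lam j.-1) (lam2 lam j.+1)
       - lam1 lam j).

Definition corner_unflip lam (j : nat) : lamT N :=
  set_col lam j
    (Num.max (lam1 lam j.-1) (lam1 lam j.+1) + Num.min (lam2 lam j.-1) (lam2 lam j.+1)
       - lam2 lam j)
    (Num.max (lam2 lam j.-1) (lam2 lam j.+1) + Num.min (lam1 lam j.-1) (lam1 lam j.+1)
       - lam1 lam j).

Lemma Zshape_flip_corner h h' (l l' : nat -> R) j l0 : (1 <= j)%N -> (j < N)%N ->
  h j -> ~~ h j.+1 -> ~~ h' j -> h' j.+1 -> l' j = l j.+1 -> l' j.+1 = l j ->
  (forall k, (1 <= k <= N)%N -> k != j -> k != j.+1 -> h' k = h k /\ l' k = l k) ->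
  Zshape N c1 c2 h' l' l0 = Zshape N c1 c2 h l l0.
Proof.
move=> j1 jN hj /negbTE hj1 /negbTE h'j h'j1 l'j l'j1 hl_eq.
have [j1N jN' jS] : [/\ (j.-1 <= N)%N, (j <= N)%N & (j.+1 <= N)%N] by split; lia.
have [ne1 ne2 ne0 neN] : [/\ (j.-1 == j) = false, (j.+1 == j) = false,
  (0 == j) = false & (N == j) = false] by split; lia.
apply: (reindex_esum_inv (e := corner_flip^~ j) (e' := corner_unflip^~ j)).
- by move=> lam; rewrite /slice /= set_col_origin //; lia.
- by move=> lam; rewrite /slice /= set_col_origin //; lia.
- move=> lam; rewrite /corner_flip /corner_unflip !lam1_set_col // !lam2_set_col //.
  by rewrite ne1 ne2 eqxx set_col_set_col; apply: set_col_idE => //; lia.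
- move=> lam; rewrite /corner_flip /corner_unflip !lam1_set_col // !lam2_set_col //.
  by rewrite ne1 ne2 eqxx set_col_set_col; apply: set_col_idE => //; lia.
move=> lam; congr (_%:E); rewrite /shape_wt /corner_flip !lam1_set_col //.
rewrite !lam2_set_col // ne0 neN.
congr (_ * _); apply: (prodr_nat_window j1); first by lia.
  move=> k /andP[k1 kN] kj kj1; have [|hk lk] := hl_eq k _ kj kj1; first by lia.
  by rewrite (eq_edge_at _ hk lk) edge_at_set_col //; lia.
rewrite /edge_at /up_of /low_of hj hj1 h'j h'j1 /= l'j l'j1.
by rewrite !lam1_set_col // !lam2_set_col // ne1 ne2 eqxx; apply: edge_wt_reflect.
Qed.

Definition first_flip lam : lamT N :=
  shift_cols lam 1 ((lam1 lam 0 + lam2 lam 0) - (lam1 lam 1 + lam2 lam 1)).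

Lemma first_flipK : (0 < N)%N -> involutive first_flip.
Proof.
move=> N0 lam; rewrite {1}/first_flip; apply: shift_colsK.
by rewrite !lam1_shift_cols // !lam2_shift_cols //=; lia.
Qed.

(* Translating the columns 1..N turns the first vertical edge into a
   horizontal one: its three interlacing conditions are permuted. *)
Lemma Zshape_flip_first h h' (l l' : nat -> R) l0 : (0 < N)%N ->
  ~~ h 1 -> h' 1 -> l' 1 = l 1 ->
  (forall k, (2 <= k <= N)%N -> h' k = h k /\ l' k = l k) ->
  Zshape N c1 c2 h' l' l0 = Zshape N c1 c2 h l l0.
Proof.
move=> N0 /negbTE h1 h'1 l'1 hl_eq.
apply: (reindex_esum_inv (e := first_flip) (e' := first_flip));
  try by [move=> lam; rewrite /slice /first_flip /= ffunE | exact: first_flipK].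
move=> lam; congr (_%:E); rewrite /shape_wt /first_flip.
rewrite !lam1_shift_cols // !lam2_shift_cols // (_ : (N < 1)%N = false) /=; last by lia.
congr (_ * c2 ^ _ * _); first by lia.
rewrite !(@big_ltn _ _ _ 1 N.+1) //; congr (_ * _).
  rewrite /edge_at /up_of /low_of h1 h'1 l'1 /=.
  by rewrite !lam1_shift_cols // !lam2_shift_cols //= /edge_wt; congr (_ ^ _ * _%:R); lia.
apply: eq_big_nat => k /andP[k2 kN]; have [|hk lk] := hl_eq k; first by lia.
by rewrite (eq_edge_at _ hk lk) edge_at_shift_cols //; lia.
Qed.

Definition last_flip lam : lamT N :=
  set_col lam N (lam1 lam N.-1 + lam2 lam N.-1 - lam2 lam N)
                (lam1 lam N.-1 + lam2 lam N.-1 - lam1 lam N).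

Lemma last_flipK : (0 < N)%N -> involutive last_flip.
Proof.
move=> N0 lam; have ne : (N.-1 == N) = false by lia.
rewrite {1}/last_flip !lam1_set_col ?leq_pred // !lam2_set_col ?leq_pred // ne eqxx.
by rewrite set_col_set_col; apply: set_col_idE => //; lia.
Qed.

Lemma Zshape_flip_last h h' (l l' : nat -> R) l0 : (0 < N)%N ->
  h N -> ~~ h' N -> l' N = l N ->
  (forall k, (1 <= k < N)%N -> h' k = h k /\ l' k = l k) ->
  Zshape N c1 c2 h' l' l0 = Zshape N c1 c2 h l l0.
Proof.
move=> N0 hN /negbTE h'N l'N hl_eq.
have [ne1 ne0] : (N.-1 == N) = false /\ (0 == N) = false by split; lia.
apply: (reindex_esum_inv (e := last_flip) (e' := last_flip));
  try by [move=> lam; rewrite /slice /last_flip /= set_col_origin //; lia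
         | exact: last_flipK].
move=> lam; congr (_%:E); rewrite /shape_wt /last_flip.
rewrite !lam1_set_col // !lam2_set_col // ne0 eqxx.
congr (_ * c2 ^ _ * _); first by lia.
rewrite !big_nat_recr //=; congr (_ * _).
  apply: eq_big_nat => k /andP[k1 kN]; have [|hk lk] := hl_eq k; first by lia.
  by rewrite (eq_edge_at _ hk lk) edge_at_set_col //; lia.
rewrite /edge_at /up_of /low_of hN h'N l'N /=.
by rewrite !lam1_set_col ?leq_pred // !lam2_set_col ?leq_pred // ne1 eqxx /edge_wt;
  congr (_ ^ _ * _%:R); lia.
Qed.

End Flips.

Lemma sumn_window (F G : nat -> nat) m n k1 k2 :
  (m <= k1)%N -> (k1 <= k2)%N -> (k2 <= n)%N ->
  (forall i, (m <= i < n)%N -> ~~ (k1 <= i < k2)%N -> G i = F i) ->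
  (\sum_(m <= i < n) G i + \sum_(k1 <= i < k2) F i =
   \sum_(m <= i < n) F i + \sum_(k1 <= i < k2) G i)%N.
Proof.
move=> mk1 k12 k2n GF; have k1n : (k1 <= n)%N by lia.
rewrite !(@big_cat_nat _ _ _ k1 m n) //= !(@big_cat_nat _ _ _ k2 k1 n) //=.
rewrite (@eq_big_nat _ _ _ m k1 G F) => [|i mi]; last by apply: GF; lia.
rewrite (@eq_big_nat _ _ _ k2 n G F) => [|i mi]; last by apply: GF; lia.
lia.
Qed.

Lemma aperD (R : realType) N (a : nat -> R) n : aper N a (n + N%:Z) = aper N a n.
Proof. by rewrite /aper (_ : n + N%:Z - 1 = (n - 1) + N%:Z) ?modzDr //; lia. Qed.

Lemma aper_range (R : realType) N (a : nat -> R) (n : int) : (0 < N)%N ->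
  exists2 i, (1 <= i <= N)%N & aper N a n = a i.
Proof.
move=> N0; exists (absz ((n - 1) %% N%:Z)%Z).+1 => //.
have := @modz_ge0 (n - 1) N%:Z; have := @ltz_pmod (n - 1) N%:Z; lia.
Qed.

Lemma int_const_of_pred (T : Type) (f : int -> T) :
  (forall m, f m = f (m - 1)) -> forall m, f m = f 0.
Proof.
move=> fP; elim/int_ind => // n IH; first by rewrite fP -IH; congr f; lia.
by rewrite -IH (fP (- n%:Z)); congr f; lia.
Qed.

Section Reduction.
Variables (R : realType) (N : nat) (c1 c2 : R) (a : nat -> R).
Implicit Types (h : nat -> bool).

Definition nhoriz h (k : nat) : nat := \sum_(1 <= i < k.+1) h i.

Definition vweight h : nat := \sum_(1 <= i < N.+1) (if h i then 0 else i).

(* A path is encoded by its first vertex (m0, m0) and its shape h: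
   its j-th edge is horizontal iff h j. *)
Definition vertex (m0 : int) h (k : nat) : int * int :=
  (m0 + (nhoriz h k)%:Z, m0 - (k%:Z - (nhoriz h k)%:Z)).

Definition shape_label (m0 : int) h (j : nat) : R :=
  if h j then aper N a (vertex m0 h j).1 else aper N a (vertex m0 h j.-1).2.

Definition Zpath h (m0 l0 : int) : \bar R := Zshape N c1 c2 h (shape_label m0 h) l0.

Definition all_horiz : nat -> bool := fun=> true.

Definition raise_first h : nat -> bool := fun k => (k == 1%N) || h k.

Definition swap_at h (i : nat) : nat -> bool :=
  fun k => h (if k == i then i.+1 else if k == i.+1 then i else k).

Lemma raise_first1 h : raise_first h 1.
Proof. by rewrite /raise_first eqxx. Qed.

Lemma raise_first_neq1 h k : k != 1%N -> raise_first h k = h k.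
Proof. by move=> /negbTE k1; rewrite /raise_first k1. Qed.

Lemma swap_atl h i : swap_at h i i = h i.+1.
Proof. by rewrite /swap_at eqxx. Qed.

Lemma swap_atr h i : swap_at h i i.+1 = h i.
Proof. by rewrite /swap_at ifN ?eqxx //; lia. Qed.

Lemma swap_at_out h i k : ~~ (i <= k < i.+2)%N -> swap_at h i k = h k.
Proof. by move=> k_out; rewrite /swap_at !ifF //; lia. Qed.

Lemma nhoriz0 h : nhoriz h 0 = 0%N.
Proof. by rewrite /nhoriz big_geq. Qed.

Lemma nhorizS h k : nhoriz h k.+1 = (nhoriz h k + h k.+1)%N.
Proof. by rewrite /nhoriz big_nat_recr. Qed.

Lemma eq_nhoriz h h' k : (forall i, (1 <= i <= k)%N -> h' i = h i) ->
  nhoriz h' k = nhoriz h k.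
Proof. by move=> hh'; apply: eq_big_nat => i /hh' ->. Qed.

Lemma nhoriz_all h k : (forall i, (1 <= i <= k)%N -> h i) -> nhoriz h k = k.
Proof.
move=> hk; rewrite /nhoriz (eq_big_nat _ _ (F2 := fun=> 1%N)) => [|i /hk -> //].
by rewrite sum_nat_const_nat subn1 muln1.
Qed.

Lemma nhoriz_raise_first h k : ~~ h 1 -> (1 <= k)%N ->
  nhoriz (raise_first h) k = (nhoriz h k).+1.
Proof.
move=> /negbTE h1 k1.
have off1 i : (1 <= i < k.+1)%N -> ~~ (1 <= i < 2)%N -> (raise_first h i : nat) = h i.
  by move=> _ i1; rewrite raise_first_neq1 //; lia.
have := @sumn_window h (raise_first h) 1 k.+1 1 2 isT isT k1 off1.
by rewrite /nhoriz !big_nat1 /raise_first eqxx h1 /=; lia.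
Qed.

Lemma vweight_raise_first_lt h : (0 < N)%N -> ~~ h 1 ->
  (vweight (raise_first h) < vweight h)%N.
Proof.
move=> N0 /negbTE h1.
have off1 i : (1 <= i < N.+1)%N -> ~~ (1 <= i < 2)%N ->
    (if raise_first h i then 0 else i) = (if h i then 0 else i).
  by move=> _ i1; rewrite raise_first_neq1 //; lia.
have := @sumn_window _ _ 1 N.+1 1 2 isT isT N0 off1.
by rewrite /vweight !big_nat1 /raise_first eqxx h1 /= addn0 => <-; rewrite addn1.
Qed.

Lemma nhoriz_swap_at h i k : (1 <= i)%N -> h i -> ~~ h i.+1 -> k != i ->
  nhoriz (swap_at h i) k = nhoriz h k.
Proof.
move=> i1 hi /negbTE hi1 ki; have [k_lt|k_gt] := ltnP k i.
  by apply: eq_nhoriz => j jk; rewrite swap_at_out //; lia.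
have k2 : (i.+2 <= k.+1)%N by lia.
have off j : (1 <= j < k.+1)%N -> ~~ (i <= j < i.+2)%N -> (swap_at h i j : nat) = h j.
  by move=> _ /swap_at_out ->.
have := @sumn_window h (swap_at h i) 1 k.+1 i i.+2 i1 (leqW (leqnSn i)) k2 off.
rewrite /nhoriz !(@big_ltn _ _ _ i i.+2) // !big_nat1 /swap_at eqxx.
by rewrite (_ : (i.+1 == i) = false) ?eqxx ?hi ?hi1; lia.
Qed.

Lemma vweight_swap_at_lt h i : (1 <= i)%N -> (i < N)%N -> h i -> ~~ h i.+1 ->
  (vweight (swap_at h i) < vweight h)%N.
Proof.
move=> i1 iN hi /negbTE hi1.
have off i' : (1 <= i' < N.+1)%N -> ~~ (i <= i' < i.+2)%N ->
    (if swap_at h i i' then 0 else i') = (if h i' then 0 else i').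
  by move=> _ /swap_at_out ->.
have := @sumn_window _ _ 1 N.+1 i i.+2 i1 (leqW (leqnSn i)) iN off.
rewrite /vweight !(@big_ltn _ _ _ i i.+2) // !big_nat1 /swap_at eqxx.
rewrite (_ : (i.+1 == i) = false) /= ?eqxx ?hi ?hi1; last by lia.
by rewrite add0n addn0 => E; rewrite -(ltn_add2r i.+1) E ltn_add2l.
Qed.

Lemma nhoriz_all_horiz k : nhoriz all_horiz k = k.
Proof. exact: nhoriz_all. Qed.

Lemma Zpath_raise_first h (m0 l0 : int) : (0 < N)%N -> ~~ h 1 ->
  Zpath (raise_first h) (m0 - 1) l0 = Zpath h m0 l0.
Proof.
move=> N0 h1; apply: Zshape_flip_first => //.
  rewrite /shape_label raise_first1 (negbTE h1) /vertex nhoriz_raise_first //=.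
  by rewrite nhoriz0 /nhoriz big_nat1 (negbTE h1); congr (aper _ _ _); lia.
move=> k /andP[k2 kN]; have [k1 k'1] : (1 <= k)%N /\ (1 <= k.-1)%N by split; lia.
rewrite /shape_label raise_first_neq1; last by lia.
by split=> //; case: (h k); rewrite /vertex /= nhoriz_raise_first //;
  congr (aper _ _ _); lia.
Qed.

Lemma Zpath_swap_at h i (m0 l0 : int) : (1 <= i)%N -> (i < N)%N -> h i -> ~~ h i.+1 ->
  Zpath (swap_at h i) m0 l0 = Zpath h m0 l0.
Proof.
move=> i1 iN hi hi1; have nh_i : nhoriz h i = (nhoriz h i.-1).+1.
  by rewrite -{1}(prednK i1) nhorizS prednK // hi addn1.
have nh_i1 : nhoriz h i.+1 = nhoriz h i by rewrite nhorizS (negbTE hi1) addn0.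
apply: (@Zshape_flip_corner _ _ _ _ _ _ _ _ i) => //; rewrite ?swap_atl ?swap_atr //.
- rewrite /shape_label swap_atl (negbTE hi1) /vertex /= nhoriz_swap_at //; last by lia.
  by congr (aper _ _ _); lia.
- by rewrite /shape_label swap_atr hi /vertex /= nhoriz_swap_at ?nh_i1 //; lia.
move=> k /andP[k1 kN] ki ki1; rewrite /shape_label swap_at_out; last by lia.
by split=> //; case: (h k); rewrite /vertex /= nhoriz_swap_at //; lia.
Qed.

Lemma horizontal_or_first_vertical h :
  (forall k, (1 <= k <= N)%N -> h k) \/
  exists2 j, (1 <= j <= N)%N && ~~ h j & forall k, (1 <= k < j)%N -> h k.
Proof.
have [ex | no_v] := pselect (exists j, (1 <= j <= N)%N && ~~ h j).
  right; have [j /andP[jN hj] jmin] := ex_minnP ex; exists j; first by rewrite jN.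
  move=> k /andP[k1 kj]; have kN : (k <= N)%N by lia.
  by apply/negPn/negP => hk; have := jmin k; rewrite k1 kN hk /=; lia.
by left => k kN; apply/negPn/negP => hk; apply: no_v; exists k; rewrite kN.
Qed.

Lemma Zpath_to_horizontal h (m0 l0 : int) : (0 < N)%N ->
  Zpath h m0 l0 = Zpath all_horiz (m0 - N%:Z + (nhoriz h N)%:Z) l0.
Proof.
move=> N0; have [n] := ubnP (vweight h); elim: n => // n IH in h m0 *.
rewrite ltnS => vn; case: (horizontal_or_first_vertical h) => [all_h | ].
  have nh_h k : (k <= N)%N -> nhoriz h k = k.
    by move=> kN; apply: nhoriz_all => i ?; apply: all_h; lia.
  rewrite nh_h // addrNK; apply: eq_Zshape => k kN.
  rewrite /shape_label /all_horiz /= all_h //; split=> //.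
  by rewrite /vertex /= nh_h ?nhoriz_all_horiz //; lia.
move=> [j /andP[/andP[j1 jN] hj] hlt]; have [j_eq1 | j_gt1] := eqVneq j 1%N.
  rewrite j_eq1 in hj; rewrite -Zpath_raise_first // IH; last first.
    by apply: leq_trans (vweight_raise_first_lt N0 hj) vn.
  by rewrite nhoriz_raise_first //; congr Zpath; lia.
have [i1 ij hi] : [/\ (1 <= j.-1)%N, j = j.-1.+1 & h j.-1].
  by split; [lia | lia | apply: hlt; lia].
rewrite ij in hj jN; rewrite -(Zpath_swap_at _ _ i1) // IH; last first.
  by apply: leq_trans (vweight_swap_at_lt i1 jN hi hj) vn.
by rewrite nhoriz_swap_at //; lia.
Qed.

Lemma Zpath_horizontal_pred (m l0 : int) : (0 < N)%N ->
  Zpath all_horiz m l0 = Zpath all_horiz (m - 1) l0.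
Proof.
move=> N0; pose h k := k != N.
have [hN h_lt] : h N = false /\ forall k, (k < N)%N -> h k by split=> [|k]; rewrite /h; lia.
have nh_lt k : (k < N)%N -> nhoriz h k = k.
  by move=> kN; apply: nhoriz_all => i ik; apply: h_lt; lia.
have nh_N : nhoriz h N = N.-1.
  by rewrite -{1}(prednK N0) nhorizS nh_lt ?prednK ?hN ?addn0 //; lia.
rewrite -[RHS](_ : Zpath h m l0 = _); last first.
  by rewrite Zpath_to_horizontal // nh_N; congr Zpath; lia.
apply: esym; apply: Zshape_flip_last; rewrite ?hN //.
  rewrite /shape_label hN /vertex /= nh_lt ?nhoriz_all_horiz; last by lia.
  by rewrite -aperD; congr (aper _ _ _); lia.
move=> k kN; rewrite /shape_label h_lt; last by lia.
by rewrite /vertex /= nh_lt ?nhoriz_all_horiz //; lia.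
Qed.

Lemma Zpath_invariant h (m0 l0 : int) : (0 < N)%N ->
  Zpath h m0 l0 = Zpath all_horiz 0 0.
Proof.
move=> N0; rewrite Zpath_to_horizontal //.
rewrite (int_const_of_pred (fun m => Zpath_horizontal_pred m l0 N0)).
exact: Zshape_slice0.
Qed.

End Reduction.

Section Paths.
Variables (R : realType) (N : nat) (a : nat -> R).

Lemma path_vertex p : is_down_right_path N p ->
  forall j, (j <= N)%N -> p j = vertex (p 0%N).1 (horiz p) j.
Proof.
case=> p00 _ steps; elim=> [_ | j IH jN].
  by rewrite /vertex nhoriz0; move: p00; case: (p 0%N) => x y /= ->; congr (_, _); lia.
have := steps j.+1; rewrite jN /= => /(_ isT) [] step.
  have hj : horiz p j.+1 by rewrite /horiz step eqxx.
  by rewrite step /vertex nhorizS hj IH /=; [congr (_, _) | ]; lia.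
have hj : horiz p j.+1 = false by rewrite /horiz step /=; lia.
by rewrite step /vertex nhorizS hj IH /=; [congr (_, _) | ]; lia.
Qed.

Lemma label_shape_label p : is_down_right_path N p ->
  forall j, (1 <= j <= N)%N -> label N a p j = shape_label N a (p 0%N).1 (horiz p) j.
Proof.
move=> P j /andP[j1 jN]; rewrite /label /shape_label.
by case: (horiz p j); rewrite (path_vertex P) //; lia.
Qed.

Lemma esum_wtGP_Zpath (c1 c2 : R) p l0 : (0 < N)%N ->
  (forall i, (1 <= i <= N)%N -> 0 < a i) -> is_down_right_path N p ->
  \esum_(lam in [set lam : lamT N | lam (ord0, ord0) = l0]) (wtGP a c1 c2 p lam)%:E =
  Zpath N c1 c2 a (horiz p) (p 0%N).1 l0.
Proof.
move=> N0 a_gt0 P; transitivity (Zshape N c1 c2 (horiz p) (label N a p) l0).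
  apply: eq_esum => lam _; rewrite wtGP_shape_wt // => j /(label_shape_label P) ->.
  rewrite /shape_label; case: ifP => _; [move: (vertex _ _ _).1 | move: (vertex _ _ _).2];
    by move=> n; have [i /a_gt0 ai_gt0 ->] := aper_range a n N0; rewrite gt_eqF.
by apply: eq_Zshape => k kN; split=> //; rewrite label_shape_label.
Qed.

End Paths.

Section Finiteness.
Variable R : realType.

Definition interlaced (x y : nat -> int) (j : nat) : bool :=
  (x j.-1 <= x j) && (y j.-1 <= y j) && (y j <= x j.-1).

Lemma ler_chain_step (rho mu l : R) (Y G U V : int) :
  0 < rho -> 0 < l -> l <= mu -> mu * l <= rho -> 0 <= U -> 0 <= V ->
  rho ^ Y * mu ^ (G + V) * l ^ (U + V) <= rho ^ (Y + V) * mu ^ (G + U).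
Proof.
move=> r0 l0 lmu mulr U0 V0; have mu0 : 0 < mu by apply: lt_le_trans lmu.
rewrite !expfzDr ?gt_eqF //.
have -> : rho ^ Y * (mu ^ G * mu ^ V) * (l ^ U * l ^ V) =
  (rho ^ Y * mu ^ G) * ((mu * l) ^ V * l ^ U) by rewrite expfzMl; ring.
have -> : rho ^ Y * rho ^ V * (mu ^ G * mu ^ U) = (rho ^ Y * mu ^ G) * (rho ^ V * mu ^ U).
  by ring.
apply: ler_wpM2l; first by rewrite mulr_ge0 ?exprz_ge0 ?(ltW r0) ?(ltW mu0).
apply: ler_pM; rewrite ?exprz_ge0 ?mulr_ge0 ?(ltW mu0) ?(ltW l0) //.
  by apply: ler_wpXz2r; rewrite -?topredE /= ?mulr_ge0 ?(ltW r0) ?(ltW mu0) ?(ltW l0).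
by apply: ler_wpXz2r; rewrite -?topredE /= ?(ltW mu0) ?(ltW l0).
Qed.

Lemma chain_le (c rho mu : R) (x y : nat -> int) (l : nat -> R) k :
  0 < c -> c <= mu -> 0 < rho ->
  (forall j, (1 <= j <= k)%N -> [/\ 0 < l j, l j <= mu & mu * l j <= rho]) ->
  y 0%N <= x 0%N -> (forall j, (1 <= j <= k)%N -> interlaced x y j) ->
  c ^ (x 0%N - y 0%N) * \prod_(1 <= j < k.+1) edge_wt (l j) (x j) (y j) (x j.-1) (y j.-1)
    <= rho ^ (y k - y 0%N) * mu ^ (x k - y k).
Proof.
move=> c0 cmu r0; elim: k => [|k IH] l_bd yx0 il.
  rewrite big_geq // mulr1 subrr expr0z mul1r; apply: ler_wpXz2r => //;
    by rewrite -?topredE /= ?subr_ge0 ?(ltW c0) // (le_trans (ltW c0) cmu).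
have [lk0 lkmu mulk] := l_bd k.+1 (leqnn _ : (1 <= k.+1 <= k.+1)%N).
have /andP[/andP[xk yk] yxk] := il k.+1 (leqnn _ : (1 <= k.+1 <= k.+1)%N).
rewrite big_nat_recr //= mulrA [edge_wt (l k.+1) _ _ _ _]/edge_wt xk yk yxk mulr1.
apply: le_trans (ler_wpM2r (exprz_ge0 _ (ltW lk0)) (IH _ yx0 _)) _.
- by move=> j jk; apply: l_bd; lia.
- by move=> j jk; apply: il; lia.
have -> : x k - y k = (x k - y k.+1) + (y k.+1 - y k) by ring.
have -> : x k.+1 + y k.+1 - (x k + y k) = (x k.+1 - x k) + (y k.+1 - y k) by ring.
have -> : y k.+1 - y 0%N = (y k - y 0%N) + (y k.+1 - y k) by ring.
have -> : x k.+1 - y k.+1 = (x k - y k.+1) + (x k.+1 - x k) by ring.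
by apply: ler_chain_step; rewrite ?subr_ge0.
Qed.

Lemma sum_prod_geometric_le (I : finType) (tau : R) (s : seq {ffun I -> int}) :
  0 < tau < 1 -> uniq s ->
  \sum_(f <- s) \prod_i tau ^+ `|f i|%N <= (2 * (1 - tau)^-1) ^+ #|I|.
Proof.
move=> /andP[tau_gt0 tau_lt1] s_uniq.
set M := (\max_(f <- s) \max_i `|f i|%N)%N.
have le_M f i : f \in s -> (`|f i| <= M)%N.
  by move=> fs; apply: leq_trans (leq_bigmax i) (leq_bigmax_seq _ fs _).
pose code (f : {ffun I -> int}) : {ffun I -> bool * 'I_M.+1} :=
  [ffun i => (f i < 0, inord `|f i|%N)].
pose H (g : {ffun I -> bool * 'I_M.+1}) : R := \prod_i tau ^+ (g i).2.
have code_inj : {in s &, injective code}.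
  move=> f1 f2 f1s f2s /ffunP eq12; apply/ffunP => i; have := eq12 i.
  rewrite !ffunE => -[sign_eq /(congr1 val)]; rewrite /= !inordK ?ltnS ?le_M //.
  by move: sign_eq; lia.
have geo n : \sum_(k < n) tau ^+ k <= (1 - tau)^-1.
  have tau_norm : `|tau| < 1 by rewrite gtr0_norm.
  have := geometric_le_lim n ler01 tau_gt0 tau_norm.
  rewrite mul1r /series /geometric /=.
  by under eq_bigr do rewrite mul1r; rewrite big_mkord.
rewrite (eq_big_seq (H \o code)) => [|f fs]; last first.
  by apply: eq_bigr => i _; rewrite ffunE /= inordK // ltnS le_M.
rewrite -(big_map code predT H) big_uniq ?map_inj_in_uniq //.
apply: (@le_trans _ _ (\sum_g H g)).
  rewrite [leRHS](bigID (mem [seq code f | f <- s])) /= lerDl.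
  by apply: sumr_ge0 => g _; apply: prodr_ge0 => i _; rewrite exprn_ge0 ?(ltW tau_gt0).
rewrite /H -(bigA_distr_bigA (fun (i : I) (p : bool * 'I_M.+1) => tau ^+ p.2)).
rewrite -prodr_const; apply: ler_prod => i _; rewrite sumr_ge0 => [|p _]; last first.
  by rewrite exprn_ge0 ?(ltW tau_gt0).
rewrite -(pair_bigA _ (fun (b : bool) (k : 'I_M.+1) => tau ^+ k)) /= big_bool /=.
by rewrite mulr_natl mulr2n; apply: lerD; apply: geo.
Qed.

Lemma nondecr_on (f : nat -> int) n : (forall j, (1 <= j <= n)%N -> f j.-1 <= f j) ->
  forall i j, (i <= j <= n)%N -> f i <= f j.
Proof.
move=> fS i j /andP[ij jn].
apply: (Order.NatMonotonyTheory.nondecn_inP (D := gtn n.+1)) => //; rewrite ?inE; try lia.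
  by move=> i' j' _ j'n k /andP[_]; rewrite !inE ltEnat /= in j'n *; lia.
by move=> k _ k1n; have := fS k.+1; apply; rewrite inE in k1n; lia.
Qed.

Lemma lam_ij N (lam : lamT N) (i : 'I_2) (k : 'I_N.+1) :
  lam (i, k) = if i == ord0 then lam1 lam k else lam2 lam k.
Proof.
rewrite /lam1 /lam2 /L inord_val.
by case: i => -[|[|]] //= ?; congr (lam (_, _)); apply/val_inj.
Qed.

Section HorizontalWeight.
Variables (N : nat) (c1 c2 rho mu : R) (l : nat -> R).
Hypotheses (N_gt0 : (0 < N)%N) (c1_gt0 : 0 < c1) (c2_gt0 : 0 < c2) (rho_gt0 : 0 < rho).
Hypotheses (c1_le_mu : c1 <= mu) (mu_c2_le : mu * c2 <= rho).
Hypothesis l_bounds : forall j, (1 <= j <= N)%N -> [/\ 0 < l j, l j <= mu & mu * l j <= rho].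

Definition interlacing (lam : lamT N) : Prop :=
  forall j, (1 <= j <= N)%N -> interlaced (lam1 lam) (lam2 lam) j.

Lemma interlacing_of_shape_wt_neq0 lam :
  shape_wt c1 c2 all_horiz l lam != 0 -> interlacing lam.
Proof.
move=> wt_neq0 j /andP[j1 jN]; apply: contraNT wt_neq0 => not_il.
rewrite /shape_wt (bigD1_seq j) ?mem_index_iota ?iota_uniq //=; last by lia.
move: not_il; rewrite {1}/edge_at /edge_wt /interlaced /= => /negbTE ->.
by rewrite !mulr0 mul0r mulr0.
Qed.

Lemma interlacing_bounds lam : interlacing lam ->
  forall ij, lam2 lam 0 <= lam ij <= lam1 lam N.
Proof.
move=> il [i k]; set x := lam1 lam; set y := lam2 lam.
have x_mono : forall i j, (i <= j <= N)%N -> x i <= x j.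
  by apply: nondecr_on => j /il /andP[/andP[]].
have y_mono : forall i j, (i <= j <= N)%N -> y i <= y j.
  by apply: nondecr_on => j /il /andP[/andP[]].
have /andP[/andP[_ y01] y1x0] := il 1%N N_gt0.
have := il N; rewrite N_gt0 leqnn => /(_ isT) /andP[/andP[xN yN] yNx].
have kN : (k <= N)%N by case: k.
have := x_mono 0%N k; have := x_mono k N; have := y_mono 0%N k; have := y_mono k N.
rewrite lam_ij; case: (i == ord0); rewrite /= -/x -/y in xN yN yNx y01 y1x0 *; lia.
Qed.

Lemma shape_wt_horiz_le_pow lam : interlacing lam ->
  shape_wt c1 c2 all_horiz l lam <= rho ^ (lam1 lam N - lam2 lam 0).
Proof.
move=> il; set x := lam1 lam; set y := lam2 lam.
have /andP[/andP[_ y01] y1x0] := il 1%N N_gt0.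
have := il N; rewrite N_gt0 leqnn => /(_ isT) /andP[/andP[xN _] yNx].
have -> : shape_wt c1 c2 all_horiz l lam = c1 ^ (x 0%N - y 0%N) *
    \prod_(1 <= j < N.+1) edge_wt (l j) (x j) (y j) (x j.-1) (y j.-1) * c2 ^ (x N - y N).
  by rewrite /shape_wt mulrAC.
apply: le_trans (ler_wpM2r (exprz_ge0 _ (ltW c2_gt0))
  (chain_le c1_gt0 c1_le_mu rho_gt0 l_bounds _ il)) _; first exact: le_trans y01 y1x0.
have mu_c2_pow : (mu * c2) ^ (x N - y N) <= rho ^ (x N - y N).
  apply: ler_wpXz2r; rewrite -?topredE /= ?subr_ge0 ?(ltW rho_gt0) //.
    exact: le_trans yNx xN.
  by rewrite mulr_ge0 ?(ltW c2_gt0) // (le_trans (ltW c1_gt0)).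
rewrite -mulrA -expfzMl.
apply: le_trans (ler_wpM2l (exprz_ge0 _ (ltW rho_gt0)) mu_c2_pow) _.
by rewrite -expfzDr ?gt_eqF // (_ : y N - y 0%N + (x N - y N) = x N - y 0%N) //; ring.
Qed.

Lemma shape_wt_horiz_le (tau : R) lam : 0 < tau <= 1 ->
  rho <= tau ^+ #|{: 'I_2 * 'I_N.+1}| ->
  shape_wt c1 c2 all_horiz l lam <=
  \prod_(ij : 'I_2 * 'I_N.+1) tau ^+ `|lam ij - lam (ord0, ord0)|%N.
Proof.
move=> /andP[tau_gt0 tau_le1] rho_le.
have [->|/interlacing_of_shape_wt_neq0 il] := eqVneq (shape_wt c1 c2 all_horiz l lam) 0.
  by apply: prodr_ge0 => ij _; rewrite exprn_ge0 ?(ltW tau_gt0).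
have bds := interlacing_bounds il; set D := `|lam1 lam N - lam2 lam 0|%N.
have DE : lam1 lam N - lam2 lam 0 = D%:Z by have := bds (ord0, ord0); rewrite /D; lia.
apply: le_trans (shape_wt_horiz_le_pow il) _; rewrite DE -exprnP.
have := @lerXn2r _ D rho (tau ^+ #|{: 'I_2 * 'I_N.+1}|); rewrite !nnegrE.
move=> /(_ (ltW rho_gt0) (exprn_ge0 _ (ltW tau_gt0)) rho_le) /le_trans; apply.
rewrite -exprM mulnC exprM -prodr_const; apply: ler_prod => ij _.
rewrite exprn_ge0 ?(ltW tau_gt0) //=; apply: (ler_wiXn2l (ltW tau_gt0) tau_le1).
by have := bds ij; have := bds (ord0, ord0); rewrite /D; lia.
Qed.

Lemma Zshape_horiz_le (tau : R) : 0 < tau < 1 -> rho <= tau ^+ #|{: 'I_2 * 'I_N.+1}| ->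
  (Zshape N c1 c2 all_horiz l 0 <= ((2 * (1 - tau)^-1) ^+ #|{: 'I_2 * 'I_N.+1}|)%:E)%E.
Proof.
move=> tau01 rho_le; have tau_le1 : 0 < tau <= 1 by case/andP: tau01 => -> /ltW.
rewrite /Zshape /esum; apply: ge_ereal_sup => _ [F [finF F_slice] <-].
rewrite fsbig_finite //= sumEFin lee_fin.
apply: le_trans (sum_prod_geometric_le tau01 (finmap.fset_uniq _)).
rewrite big_seq [leRHS]big_seq; apply: ler_sum => lam lam_in.
have lam00 : lam (ord0, ord0) = 0 by apply: F_slice; rewrite in_fset_set // inE in lam_in.
apply: le_trans (shape_wt_horiz_le lam tau_le1 rho_le) _.
by rewrite lam00 (eq_bigr (fun ij => tau ^+ `|lam ij|%N)) // => ij _; rewrite subr0.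
Qed.

End HorizontalWeight.

End Finiteness.

Section Constants.
Variable R : realType.

Lemma exists_max_on (f : nat -> R) n : (0 < n)%N ->
  exists2 k, (1 <= k <= n)%N & forall i, (1 <= i <= n)%N -> f i <= f k.
Proof.
move=> n0; pose i0 : 'I_n := Ordinal n0.
case: (@arg_maxP _ _ _ i0 predT (fun i : 'I_n => f i.+1)) => // k _ k_max.
exists k.+1; first by rewrite ltn_ord.
move=> i /andP[i1 iN]; have := k_max (Ordinal (_ : i.-1 < n)%N).
by rewrite /= prednK //; apply; lia.
Qed.

Lemma exists_root (rho : R) n : 0 < rho < 1 -> (0 < n)%N ->
  exists2 tau, 0 < tau < 1 & rho = tau ^+ n.
Proof.
move=> /andP[rho_gt0 rho_lt1] n_gt0; have r_gt0 : 0 < n%:R^-1 :> R by rewrite invr_gt0 ltr0n.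
exists (rho `^ n%:R^-1); last first.
  by rewrite -powR_mulrn ?powR_ge0 // -powRrM mulVf ?pnatr_eq0 -?lt0n // powRr1 ?ltW.
have := gt0_ltr_powR r_gt0; move=> /(_ rho 1); rewrite !nnegrE powR1 powR_gt0 //=.
by apply; rewrite ?(ltW rho_gt0).
Qed.

Lemma weight_constants (A c1 c2 : R) : 0 < c1 -> 0 < c2 ->
  A * A < 1 -> A * c1 < 1 -> A * c2 < 1 -> c1 * c2 < 1 ->
  exists rho mu, [/\ 0 < rho < 1, c1 <= mu, A <= mu, mu * c2 <= rho & mu * A <= rho].
Proof.
move=> c1_gt0 c2_gt0 AA Ac1 Ac2 cc.
set rho := Num.max (Num.max (c1 * c2) (A * c1)) (Num.max (A * c2) (A * A)).
have [c12 Ac1_le Ac2_le AA_le] :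
    [/\ c1 * c2 <= rho, A * c1 <= rho, A * c2 <= rho & A * A <= rho].
  by rewrite /rho !le_max !lexx !orbT.
exists rho, (Num.max c1 A); split.
- by rewrite /rho !lt_max !gt_max mulr_gt0 ?AA ?Ac1 ?Ac2 ?cc.
- by rewrite le_max lexx.
- by rewrite le_max lexx orbT.
- by rewrite maxEle; case: ifP.
- by rewrite maxEle; case: ifP; rewrite // mulrC.
Qed.

End Constants.

Lemma Zpath_horizontal_fin_num (R : realType) N (a : nat -> R) (c1 c2 : R) :
  (0 < N)%N -> (forall i, (1 <= i <= N)%N -> 0 < a i) -> 0 < c1 -> 0 < c2 ->
  (forall i j, (1 <= i <= N)%N -> (1 <= j <= N)%N -> a i * a j < 1) ->
  (forall i, (1 <= i <= N)%N -> a i * c1 < 1) ->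
  (forall i, (1 <= i <= N)%N -> a i * c2 < 1) -> c1 * c2 < 1 ->
  Zpath N c1 c2 a all_horiz 0 0 \is a fin_num.
Proof.
move=> N0 a_gt0 c1_gt0 c2_gt0 aa ac1 ac2 cc.
have [k kN a_le] := exists_max_on a N0.
have [rho [mu [rho01 c1_mu A_mu mu_c2 mu_A]]] :=
  weight_constants c1_gt0 c2_gt0 (aa k k kN kN) (ac1 k kN) (ac2 k kN) cc.
have card_gt0 : (0 < #|{: 'I_2 * 'I_N.+1}|)%N by rewrite card_prod !card_ord muln_gt0.
have [tau tau01 rho_tau] := exists_root rho01 card_gt0.
have l_bd j : (1 <= j <= N)%N -> [/\ 0 < shape_label N a 0 all_horiz j,
    shape_label N a 0 all_horiz j <= mu & mu * shape_label N a 0 all_horiz j <= rho].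
  move=> _; rewrite /shape_label /=.
  have [i /[dup] iN /a_le ai_le ->] := aper_range a (vertex 0 all_horiz j).1 N0.
  split; [exact: a_gt0 | exact: le_trans A_mu |].
  by apply: le_trans mu_A; rewrite ler_wpM2l // (le_trans (ltW c1_gt0)).
rewrite ge0_fin_numE; last first.
  by apply: esum_ge0 => lam _; rewrite lee_fin shape_wt_ge0 // => j /l_bd[].
have rho_gt0 : 0 < rho by case/andP: rho01.
apply: le_lt_trans (ltry _).
by apply: (Zshape_horiz_le N0 c1_gt0 c2_gt0 rho_gt0 c1_mu mu_c2 l_bd tau01); rewrite rho_tau.
Qed.

Theorem proposition2p15 (R : realType) (N : nat) (a : nat -> R) (c1 c2 : R) :
  (0 < N)%N ->
  (forall i, (1 <= i <= N)%N -> 0 < a i) -> 0 < c1 -> 0 < c2 ->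
  (forall i j, (1 <= i <= N)%N -> (1 <= j <= N)%N -> a i * a j < 1) ->
  (forall i, (1 <= i <= N)%N -> a i * c1 < 1) ->
  (forall i, (1 <= i <= N)%N -> a i * c2 < 1) ->
  c1 * c2 < 1 ->
  exists Z : R, forall (p : nat -> int * int), @is_down_right_path N p ->
    forall l0 : int,
      \esum_(lam in [set lam : lamT N | lam (ord0, ord0) = l0])
         (@wtGP R N a c1 c2 p lam)%:E = Z%:E.
Proof.
move=> N0 a_gt0 c1_gt0 c2_gt0 aa ac1 ac2 cc.
have Z_fin := Zpath_horizontal_fin_num N0 a_gt0 c1_gt0 c2_gt0 aa ac1 ac2 cc.
exists (fine (Zpath N c1 c2 a all_horiz 0 0)) => p P l0.
by rewrite esum_wtGP_Zpath // Zpath_invariant // fineK.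
Qed.
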